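(* Let $1<\alpha<2$, let $k_0\ge 3$ be an integer, and for $j\in\mathbb{Z}$ let $c_j=(-1)^j\Gamma(\alpha+1)/[\Gamma(\alpha/2-j+1)\Gamma(\alpha/2+j+1)]$. Then $$\frac{\left(1-\frac{1+\alpha}{5+\alpha/2}\right)^{5+\alpha/2}e^{\alpha+1}\Gamma(\alpha+1)\sin(\pi\alpha/2)}{\pi\alpha\,(k_0+1/2)^{\alpha}}<\sum_{j=k_0+1}^{\infty}|c_j|<\frac{\sqrt{2}\,e^{13/12}\,\Gamma(\alpha+1)\sin(\pi\alpha/2)}{\pi\alpha\,(k_0-1)^{\alpha}}.$$
   Context: $\Gamma$ denotes the Euler gamma function (with $1/\Gamma$ taken to be $0$ at poles). *)

From Stdlib Require Import Reals Arith.
From Coquelicot Require Import Coquelicot.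
Open Scope R_scope.

Fixpoint pochhammer_succ (x : R) (n : nat) : R :=
  match n with
  | O => x
  | S m => pochhammer_succ x m * (x + INR (S m))
  end.

(* Reciprocal Gamma function via Gauss's product formula, valid for every real x:
   1/Gamma(x) = lim_{n->oo} x(x+1)...(x+n) / (n! n^x).
   It vanishes exactly at the poles 0,-1,-2,... (the convention 1/Gamma = 0 there). *)
Definition rgamma (x : R) : R :=
  real (Lim_seq (fun n => pochhammer_succ x n / (INR (fact n) * Rpower (INR n) x))).

(* Euler Gamma function (used only away from poles). *)
Definition Gamma (x : R) : R := / rgamma x.

Definition cj (alpha : R) (j : Z) : R :=
  powerRZ (-1) j * Gamma (alpha + 1)
  * rgamma (alpha / 2 - IZR j + 1) * rgamma (alpha / 2 + IZR j + 1).

From Stdlib Require Import Reals Arith Lra Lia.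
From Coquelicot Require Import Coquelicot.
Open Scope R_scope.

(** With x = alpha/2 and q_N = Gamma(N - x) / Gamma(N + x), the functional equation
    of 1/Gamma together with the reflection formula along the integers gives, for j >= 1,
      |c_j| = Gamma(alpha + 1) / (alpha Gamma(x) Gamma(1 - x)) * (q_j - q_(j+1)),
    so the tail telescopes to Gamma(alpha + 1) q_(k0+1) / (alpha Gamma(x) Gamma(1 - x)).
    Everything is derived from Gauss's product for 1/Gamma.  Comparing the Wallis-type
    integrals of cos(2xt) cos^(2m) t and cos^(2m) t bounds the partial Euler products
    from below by sin(pi x)/(pi x), whence
      sin(pi x)/pi <= 1/(Gamma(x) Gamma(1 - x)) <= x (1 - x^2);
    comparing Pochhammer quotients with powers gives the Gautschi-type bounds
      K^(-2x) <= q_K <= (K - 1 - x)^(-2x). *)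

Lemma Rpower_pos a b : 0 < Rpower a b.
Proof. apply exp_pos. Qed.

Lemma Rpower_1_base c : Rpower 1 c = 1.
Proof. unfold Rpower. rewrite ln_1, Rmult_0_r. apply exp_0. Qed.

Lemma exp_le_exp_compat a b : a <= b -> exp a <= exp b.
Proof.
  intro Hab. destruct (Req_dec a b) as [-> | Hne]; [lra|].
  apply Rlt_le, exp_increasing. lra.
Qed.

Lemma ln_le_sub_1 z : 0 < z -> ln z <= z - 1.
Proof.
  intro Hz. pose proof (exp_ineq1_le (ln z)) as H.
  rewrite exp_ln in H by exact Hz. lra.
Qed.

Lemma ln_succ_div_le m : 0 < m -> ln ((m + 1) / m) <= 1 / m.
Proof.
  intro Hm. eapply Rle_trans; [apply ln_le_sub_1, Rdiv_lt_0_compat; lra|].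
  right. field. lra.
Qed.

Lemma ln_succ_div_ge m : 0 < m -> 1 / (m + 1) <= ln ((m + 1) / m).
Proof.
  intro Hm.
  pose proof (ln_le_sub_1 (m / (m + 1)) ltac:(apply Rdiv_lt_0_compat; lra)) as H.
  replace ((m + 1) / m) with (/ (m / (m + 1))) by (field; lra).
  rewrite ln_Rinv by (apply Rdiv_lt_0_compat; lra).
  replace (m / (m + 1) - 1) with (- (1 / (m + 1))) in H by (field; lra). lra.
Qed.

Lemma Rpower_succ_div_ge y m : 0 <= y -> 0 < m -> 1 + y / (m + 1) <= Rpower ((m + 1) / m) y.
Proof.
  intros Hy Hm. unfold Rpower. eapply Rle_trans; [|apply exp_ineq1_le].
  pose proof (ln_succ_div_ge m Hm).
  replace (y / (m + 1)) with (y * (1 / (m + 1))) by (field; lra). nra.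
Qed.

Lemma Rpower_div a b c : 0 < a -> 0 < b -> Rpower a c / Rpower b c = Rpower (a / b) c.
Proof.
  intros Ha Hb. unfold Rdiv. rewrite <- Rpower_Ropp, <- Rpower_mult_distr;
    [| exact Ha | apply Rinv_0_lt_compat, Hb].
  f_equal. unfold Rpower. rewrite ln_Rinv by exact Hb. f_equal. ring.
Qed.

Lemma is_lim_seq_INR_add d : is_lim_seq (fun n => INR n + d) p_infty.
Proof.
  apply (is_lim_seq_plus _ _ p_infty d);
    [apply is_lim_seq_INR | apply is_lim_seq_const | reflexivity].
Qed.

Lemma is_lim_seq_inv_INR_add d : is_lim_seq (fun n => / (INR n + d)) 0.
Proof.
  replace (Finite 0) with (Rbar_inv p_infty) by reflexivity.
  apply is_lim_seq_inv; [apply is_lim_seq_INR_add | discriminate].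
Qed.

Lemma is_lim_seq_INR_add_ratio a b : is_lim_seq (fun n => (INR n + a) / (INR n + b)) 1.
Proof.
  pose proof (is_lim_seq_plus' _ _ _ _ (is_lim_seq_const 1)
    (is_lim_seq_mult' _ _ _ _ (is_lim_seq_const (a - b)) (is_lim_seq_inv_INR_add b))) as H.
  rewrite Rmult_0_r, Rplus_0_r in H.
  apply is_lim_seq_ext_loc with (2 := H).
  destruct (INR_unbounded (- b)) as [N HN]. exists N. intros n Hn.
  assert (INR N <= INR n) by (apply le_INR; exact Hn).
  field. lra.
Qed.

Lemma is_lim_seq_Rpower_1 (u : nat -> R) c :
  is_lim_seq u 1 -> is_lim_seq (fun n => Rpower (u n) c) 1.
Proof.
  intro H.
  assert (C : continuity_pt (fun z => Rpower z c) 1).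
  { apply continuity_pt_filterlim, (ex_derive_continuous (V := R_NormedModule) (fun z => Rpower z c)).
    unfold Rpower. auto_derive. lra. }
  pose proof (is_lim_seq_continuous (fun z => Rpower z c) u 1 C H) as K.
  unfold Rpower at 2 in K. rewrite ln_1, Rmult_0_r, exp_0 in K. exact K.
Qed.

Lemma is_lim_seq_inv_Rpower d e : 0 < e -> is_lim_seq (fun n => / Rpower (INR n + d) e) 0.
Proof.
  intro He.
  assert (Hln : is_lim_seq (fun n => ln (INR n + d)) p_infty).
  { apply (is_lim_comp_seq ln _ p_infty p_infty is_lim_ln_p);
      [exists 0%nat; discriminate | apply is_lim_seq_INR_add]. }
  assert (Hpow : is_lim_seq (fun n => Rpower (INR n + d) e) p_infty).
  { apply (is_lim_comp_seq exp _ p_infty p_infty is_lim_exp_p); [exists 0%nat; discriminate|].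
    apply is_lim_seq_ext with (fun n => ln (INR n + d) * e); [intro n; ring|].
    apply (is_lim_seq_mult _ _ p_infty e); [exact Hln | apply is_lim_seq_const |].
    apply is_Rbar_mult_p_infty_pos. exact He. }
  replace (Finite 0) with (Rbar_inv p_infty) by reflexivity.
  apply is_lim_seq_inv; [exact Hpow | discriminate].
Qed.

Lemma is_series_telescope (V : nat -> R) :
  is_lim_seq V 0 -> is_series (fun n => V n - V (S n)) (V O).
Proof.
  intro H.
  assert (Hsum : forall n, sum_n (fun k => V k - V (S k)) n = V O - V (S n)).
  { induction n as [|n IH]; [apply sum_O|].
    rewrite sum_Sn, IH. unfold plus; simpl. ring. }
  assert (L : is_lim_seq (sum_n (fun k => V k - V (S k))) (V O)).
  { apply (is_lim_seq_ext (fun n => V O - V (S n))); [intro n; symmetry; apply Hsum|].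
    pose proof (is_lim_seq_minus' _ _ _ _ (is_lim_seq_const (V O))
      (proj1 (is_lim_seq_incr_1 V 0) H)) as K.
    rewrite Rminus_0_r in K. exact K. }
  exact L.
Qed.

(** * Gauss's product for the reciprocal Gamma function *)

Definition gauss_seq (y : R) (n : nat) : R :=
  pochhammer_succ y n / (INR (fact n) * Rpower (INR n) y).

Lemma pochhammer_succ_shift y n :
  pochhammer_succ y n * (y + INR n + 1) = y * pochhammer_succ (y + 1) n.
Proof.
  induction n as [|n IH]; [simpl; ring|].
  cbn [pochhammer_succ]. rewrite S_INR.
  transitivity (pochhammer_succ y n * (y + INR n + 1) * (y + INR n + 2)); [ring|].
  rewrite IH. ring.
Qed.

Lemma pochhammer_succ_pos y n : 0 < y -> 0 < pochhammer_succ y n.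
Proof.
  intro Hy. induction n as [|n IH]; cbn [pochhammer_succ]; [exact Hy|].
  pose proof (pos_INR (S n)). apply Rmult_lt_0_compat; lra.
Qed.

Lemma gauss_seq_pos y n : 0 < y -> 0 < gauss_seq y n.
Proof.
  intro Hy. apply Rdiv_lt_0_compat; [apply pochhammer_succ_pos, Hy|].
  apply Rmult_lt_0_compat; [apply INR_fact_lt_0 | apply Rpower_pos].
Qed.

Lemma gauss_seq_shift y n : (1 <= n)%nat ->
  gauss_seq y n * (y + INR n + 1) = y * INR n * gauss_seq (y + 1) n.
Proof.
  intro Hn. assert (0 < INR n) by (apply lt_0_INR; lia).
  unfold gauss_seq. rewrite Rpower_plus, Rpower_1 by lra.
  pose proof (INR_fact_lt_0 n). pose proof (Rpower_pos (INR n) y).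
  transitivity (pochhammer_succ y n * (y + INR n + 1) / (INR (fact n) * Rpower (INR n) y));
    [field; lra|].
  rewrite pochhammer_succ_shift. field. lra.
Qed.

Lemma gauss_seq_succ y n : (1 <= n)%nat ->
  gauss_seq y (S n) * Rpower ((INR n + 1) / INR n) y
  = gauss_seq y n * ((y + INR n + 1) / (INR n + 1)).
Proof.
  intro Hn. assert (0 < INR n) by (apply lt_0_INR; lia).
  assert (E : Rpower (INR (S n)) y = Rpower (INR n) y * Rpower ((INR n + 1) / INR n) y).
  { rewrite Rpower_mult_distr by (try apply Rdiv_lt_0_compat; lra).
    rewrite S_INR. f_equal. field. lra. }
  unfold gauss_seq. cbn [pochhammer_succ]. rewrite E.
  change (fact (S n)) with (S n * fact n)%nat. rewrite mult_INR, S_INR.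
  pose proof (INR_fact_lt_0 n). pose proof (Rpower_pos (INR n) y).
  pose proof (Rpower_pos ((INR n + 1) / INR n) y).
  field. repeat split; lra.
Qed.

Lemma gauss_seq_decr y n : 0 < y -> (1 <= n)%nat -> gauss_seq y (S n) <= gauss_seq y n.
Proof.
  intros Hy Hn. assert (0 < INR n) by (apply lt_0_INR; lia).
  pose proof (gauss_seq_succ y n Hn) as E.
  pose proof (Rpower_succ_div_ge y (INR n) ltac:(lra) H) as Hq.
  pose proof (Rpower_pos ((INR n + 1) / INR n) y).
  pose proof (gauss_seq_pos y n Hy).
  replace (1 + y / (INR n + 1)) with ((y + INR n + 1) / (INR n + 1)) in Hq by (field; lra).
  apply (Rmult_le_reg_r (Rpower ((INR n + 1) / INR n) y)); [lra|].
  rewrite E. apply Rmult_le_compat_l; lra.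
Qed.

Lemma is_lim_seq_gauss_seq_pred y (l : R) :
  is_lim_seq (gauss_seq (y + 1)) l -> is_lim_seq (gauss_seq y) (y * l).
Proof.
  intro H.
  pose proof (is_lim_seq_mult' _ _ _ _ (is_lim_seq_mult' _ _ _ _ (is_lim_seq_const y) H)
    (is_lim_seq_INR_add_ratio 0 (y + 1))) as K.
  rewrite Rmult_1_r in K.
  apply is_lim_seq_ext_loc with (2 := K).
  destruct (INR_unbounded (Rabs y)) as [N HN]. exists (S N). intros n Hn.
  assert (INR N <= INR n) by (apply le_INR; lia).
  pose proof (Rle_abs (- y)). rewrite Rabs_Ropp in H1.
  apply (Rmult_eq_reg_r (y + INR n + 1)); [|lra].
  rewrite gauss_seq_shift by lia. field. lra.
Qed.

Lemma ex_lim_seq_gauss_seq y : exists l : R, is_lim_seq (gauss_seq y) l.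
Proof.
  destruct (INR_unbounded (- y)) as [m Hm]. revert y Hm.
  induction m as [|m IH]; intros y Hm.
  - destruct (ex_finite_lim_seq_decr (fun n => gauss_seq y (S n)) 0) as [l Hl].
    + intro n. apply gauss_seq_decr; [simpl in Hm; lra | lia].
    + intro n. apply Rlt_le, gauss_seq_pos. simpl in Hm. lra.
    + exists l. apply is_lim_seq_incr_1, Hl.
  - rewrite S_INR in Hm. destruct (IH (y + 1) ltac:(lra)) as [l Hl].
    exists (y * l). apply is_lim_seq_gauss_seq_pred, Hl.
Qed.

Lemma is_lim_seq_gauss_seq y : is_lim_seq (gauss_seq y) (rgamma y).
Proof.
  destruct (ex_lim_seq_gauss_seq y) as [l Hl].
  change (is_lim_seq (gauss_seq y) (real (Lim_seq (gauss_seq y)))).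
  rewrite (is_lim_seq_unique _ _ Hl). exact Hl.
Qed.

Lemma rgamma_of_lim y (l : R) : is_lim_seq (gauss_seq y) l -> rgamma y = l.
Proof.
  intro H. pose proof (is_lim_seq_unique _ _ (is_lim_seq_gauss_seq y)) as E.
  rewrite (is_lim_seq_unique _ _ H) in E. injection E as E. symmetry. exact E.
Qed.

Lemma rgamma_rec y : rgamma y = y * rgamma (y + 1).
Proof. apply rgamma_of_lim, is_lim_seq_gauss_seq_pred, is_lim_seq_gauss_seq. Qed.

Lemma rgamma_nonneg y : 0 < y -> 0 <= rgamma y.
Proof.
  intro Hy.
  apply (is_lim_seq_le (fun _ => 0) (gauss_seq y) 0 (rgamma y));
    [intro n; apply Rlt_le, gauss_seq_pos, Hy | apply is_lim_seq_const | apply is_lim_seq_gauss_seq].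
Qed.

Lemma pochhammer_succ_1 n : pochhammer_succ 1 n = INR (fact (S n)).
Proof.
  induction n as [|n IH]; [simpl; ring|].
  cbn [pochhammer_succ]. rewrite IH.
  change (fact (S (S n))) with (S (S n) * fact (S n))%nat.
  rewrite mult_INR, (S_INR (S n)). ring.
Qed.

Lemma rgamma_1 : rgamma 1 = 1.
Proof.
  apply rgamma_of_lim, is_lim_seq_ext_loc with (2 := is_lim_seq_INR_add_ratio 1 0).
  exists 1%nat. intros n Hn. assert (0 < INR n) by (apply lt_0_INR; lia).
  unfold gauss_seq. rewrite pochhammer_succ_1, Rpower_1 by lra.
  change (fact (S n)) with (S n * fact n)%nat. rewrite mult_INR, S_INR.
  pose proof (INR_fact_lt_0 n). field. lra.
Qed.

(** * Wallis integrals and partial Euler products *)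

Fixpoint prod_1_to (f : nat -> R) (n : nat) : R :=
  match n with O => 1 | S m => prod_1_to f m * f (S m) end.

Lemma prod_1_to_mult f g n : prod_1_to (fun k => f k * g k) n = prod_1_to f n * prod_1_to g n.
Proof. induction n as [|n IH]; simpl; [ring | rewrite IH; ring]. Qed.

Lemma prod_1_to_ext f g n : (forall k, (1 <= k)%nat -> f k = g k) -> prod_1_to f n = prod_1_to g n.
Proof. intro H. induction n as [|n IH]; simpl; [reflexivity|]. rewrite IH, H by lia. reflexivity. Qed.

Lemma prod_1_to_pos f n : (forall k, (1 <= k)%nat -> 0 < f k) -> 0 < prod_1_to f n.
Proof.
  intro H. induction n as [|n IH]; simpl; [lra|].
  apply Rmult_lt_0_compat; [exact IH | apply H; lia].
Qed.

Lemma prod_1_to_unit_interval f n :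
  (forall k, (1 <= k)%nat -> 0 <= f k <= 1) -> 0 <= prod_1_to f n <= 1.
Proof.
  intro H. induction n as [|n IH]; simpl; [lra|].
  specialize (H (S n) ltac:(lia)). nra.
Qed.

Lemma prod_1_to_le_first f n :
  (forall k, (1 <= k)%nat -> 0 <= f k <= 1) -> prod_1_to f (S n) <= f 1%nat.
Proof.
  intro H. induction n as [|n IH]; [simpl; lra|].
  change (prod_1_to f (S n) * f (S (S n)) <= f 1%nat).
  pose proof (prod_1_to_unit_interval f (S n) H).
  specialize (H (S (S n)) ltac:(lia)). nra.
Qed.

Definition wallis_integrand (x : R) (n : nat) (t : R) : R := cos (2 * x * t) * cos t ^ n.

Definition wallis_integral (x : R) (n : nat) : R := RInt (wallis_integrand x n) 0 (PI / 2).

Lemma wallis_integrand_continuous x n t : continuous (wallis_integrand x n) t.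
Proof.
  apply (ex_derive_continuous (V := R_NormedModule) (wallis_integrand x n)).
  unfold wallis_integrand. auto_derive. auto.
Qed.

Lemma is_RInt_wallis x n : is_RInt (wallis_integrand x n) 0 (PI / 2) (wallis_integral x n).
Proof.
  apply (RInt_correct (V := R_CompleteNormedModule)).
  apply (ex_RInt_continuous (V := R_CompleteNormedModule)).
  intros t _. apply wallis_integrand_continuous.
Qed.

Lemma wallis_integral_rec x n :
  (INR (S (S n)) ^ 2 - 4 * x ^ 2) * wallis_integral x (S (S n))
  = INR (S (S n)) * INR (S n) * wallis_integral x n.
Proof.
  set (N := INR (S (S n))).
  set (H := fun t => N * cos t ^ S n * sin t * cos (2 * x * t)
                     - 2 * x * sin (2 * x * t) * cos t ^ S (S n)).
  set (h := fun t => (N ^ 2 - 4 * x ^ 2) * wallis_integrand x (S (S n)) t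
                     - N * INR (S n) * wallis_integrand x n t).
  assert (Hd : forall t, is_derive H t (h t)).
  { intro t. unfold H, h, wallis_integrand. auto_derive; [auto|].
    change (match n with O => 1 | S _ => INR n + 1 end) with (INR (S n)).
    unfold N. rewrite (S_INR (S n)). pose proof (sin2_cos2 t) as E. unfold Rsqr in E.
    apply Rminus_diag_uniq.
    transitivity (- (INR (S n) + 1) * INR (S n) * cos t ^ n * cos (2 * x * t)
                  * (sin t * sin t + cos t * cos t - 1)); [simpl; ring|].
    rewrite E. ring. }
  assert (I1 : is_RInt h 0 (PI / 2) (minus (H (PI / 2)) (H 0))).
  { apply (is_RInt_derive (V := R_CompleteNormedModule)); [intros; apply Hd|].
    intros t _. apply (ex_derive_continuous (V := R_NormedModule) h).
    unfold h, wallis_integrand. auto_derive. auto. }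
  assert (I2 : is_RInt h 0 (PI / 2)
     (minus (scal (N ^ 2 - 4 * x ^ 2) (wallis_integral x (S (S n))))
            (scal (N * INR (S n)) (wallis_integral x n)))).
  { apply (is_RInt_minus (V := R_NormedModule));
      apply (is_RInt_scal (V := R_NormedModule)); apply is_RInt_wallis. }
  assert (HPI2 : H (PI / 2) = 0) by (unfold H; rewrite cos_PI2; simpl; ring).
  assert (H0 : H 0 = 0) by (unfold H; rewrite Rmult_0_r, sin_0; ring).
  pose proof (is_RInt_unique (V := R_CompleteNormedModule) _ _ _ _ I1) as E1.
  rewrite (is_RInt_unique (V := R_CompleteNormedModule) _ _ _ _ I2), HPI2, H0 in E1.
  unfold minus, plus, opp, scal, mult in E1; simpl in E1. unfold mult in E1; simpl in E1.
  unfold N in *. simpl in *. lra.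
Qed.

Lemma wallis_integral_0 x : x <> 0 -> wallis_integral x 0 = sin (PI * x) / (2 * x).
Proof.
  intro Hx.
  assert (I : is_RInt (wallis_integrand x 0) 0 (PI / 2)
                (minus (sin (2 * x * (PI / 2)) / (2 * x)) (sin (2 * x * 0) / (2 * x)))).
  { apply (is_RInt_derive (V := R_CompleteNormedModule) (fun t => sin (2 * x * t) / (2 * x))).
    - intros t _. unfold wallis_integrand. auto_derive; [auto|]. simpl. field. exact Hx.
    - intros t _. apply wallis_integrand_continuous. }
  unfold wallis_integral. rewrite (is_RInt_unique (V := R_CompleteNormedModule) _ _ _ _ I).
  unfold minus, plus, opp; simpl. rewrite Rmult_0_r, sin_0.
  replace (2 * x * (PI / 2)) with (PI * x) by field. field. exact Hx.
Qed.

Lemma wallis_integral_0_0 : wallis_integral 0 0 = PI / 2.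
Proof.
  assert (I : is_RInt (wallis_integrand 0 0) 0 (PI / 2) (minus (PI / 2) 0)).
  { apply (is_RInt_derive (V := R_CompleteNormedModule) (fun t => t)).
    - intros t _. unfold wallis_integrand. auto_derive; [auto|].
      replace (2 * 0 * t) with 0 by ring. rewrite cos_0. ring.
    - intros t _. apply wallis_integrand_continuous. }
  unfold wallis_integral. rewrite (is_RInt_unique (V := R_CompleteNormedModule) _ _ _ _ I).
  unfold minus, plus, opp; simpl. ring.
Qed.

Lemma wallis_integral_even x m :
  wallis_integral x (2 * m)
    * (prod_1_to (fun k => 4 * INR k ^ 2) m * prod_1_to (fun k => 1 - x ^ 2 / INR k ^ 2) m)
  = prod_1_to (fun k => 2 * INR k * (2 * INR k - 1)) m * wallis_integral x 0.
Proof.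
  induction m as [|m IH]; [simpl; ring|].
  replace (2 * S m)%nat with (S (S (2 * m))) by lia.
  pose proof (wallis_integral_rec x (2 * m)) as E.
  replace (INR (S (S (2 * m)))) with (2 * INR (S m)) in E
    by (rewrite !S_INR, mult_INR; simpl; ring).
  replace (INR (S (2 * m))) with (2 * INR (S m) - 1) in E
    by (rewrite !S_INR, mult_INR; simpl; ring).
  assert (HS : 0 < INR (S m)) by apply lt_0_INR, Nat.lt_0_succ.
  cbn [prod_1_to].
  transitivity (((2 * INR (S m)) ^ 2 - 4 * x ^ 2) * wallis_integral x (S (S (2 * m)))
    * (prod_1_to (fun k => 4 * INR k ^ 2) m * prod_1_to (fun k => 1 - x ^ 2 / INR k ^ 2) m));
    [field; lra|].
  rewrite E, Rmult_assoc, IH. ring.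
Qed.

Lemma wallis_integral_le x n : wallis_integral x (2 * n) <= wallis_integral 0 (2 * n).
Proof.
  apply (is_RInt_le (wallis_integrand x (2 * n)) (wallis_integrand 0 (2 * n)) 0 (PI / 2));
    [pose proof PI_RGT_0; lra | apply is_RInt_wallis | apply is_RInt_wallis |].
  intros t _. unfold wallis_integrand. rewrite Rmult_0_r, Rmult_0_l, cos_0.
  assert (0 <= cos t ^ (2 * n)) by (rewrite pow_mult; apply pow_le, pow2_ge_0).
  pose proof (COS_bound (2 * x * t)). nra.
Qed.

(** * Reflection bounds *)

Lemma euler_factor_bounds y k : 0 <= y < 1 -> (1 <= k)%nat -> 0 < 1 - y ^ 2 / INR k ^ 2 <= 1.
Proof.
  intros Hy Hk. assert (1 <= INR k) by (apply (le_INR 1); exact Hk).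
  assert (Hinv : 0 < / INR k ^ 2 <= 1).
  { split; [apply Rinv_0_lt_compat; nra|]. rewrite <- Rinv_1. apply Rinv_le_contravar; nra. }
  unfold Rdiv. nra.
Qed.

Lemma sin_le_euler_partial_product x m : 0 < x < 1 ->
  sin (PI * x) / PI <= x * prod_1_to (fun k => 1 - x ^ 2 / INR k ^ 2) m.
Proof.
  intro Hx. pose proof PI_RGT_0.
  assert (S0 : prod_1_to (fun k => 1 - 0 ^ 2 / INR k ^ 2) m = 1).
  { clear. induction m as [|m IH]; cbn [prod_1_to]; [reflexivity | rewrite IH; unfold Rdiv; ring]. }
  pose proof (wallis_integral_even x m) as Ex.
  pose proof (wallis_integral_even 0 m) as E0.
  rewrite wallis_integral_0 in Ex by lra. rewrite S0, wallis_integral_0_0 in E0.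
  set (P := prod_1_to (fun k => 2 * INR k * (2 * INR k - 1)) m) in *.
  set (D := prod_1_to (fun k => 4 * INR k ^ 2) m) in *.
  set (S := prod_1_to (fun k => 1 - x ^ 2 / INR k ^ 2) m) in *.
  assert (HP : 0 < P).
  { apply prod_1_to_pos. intros k Hk. assert (1 <= INR k) by (apply (le_INR 1); exact Hk). nra. }
  assert (HD : 0 < D).
  { apply prod_1_to_pos. intros k Hk. assert (1 <= INR k) by (apply (le_INR 1); exact Hk). nra. }
  assert (HS : 0 < S) by (apply prod_1_to_pos; intros k Hk; apply euler_factor_bounds; [lra | exact Hk]).
  assert (Key : P * (sin (PI * x) / (2 * x)) <= P * (PI / 2 * S)).
  { rewrite <- Ex.
    replace (P * (PI / 2 * S)) with (wallis_integral 0 (2 * m) * (D * S))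
      by (transitivity (wallis_integral 0 (2 * m) * (D * 1) * S); [ring | rewrite E0; ring]).
    apply Rmult_le_compat_r; [nra | apply wallis_integral_le]. }
  apply Rmult_le_reg_l in Key; [|exact HP].
  replace (sin (PI * x) / PI) with (sin (PI * x) / (2 * x) * (2 * x / PI)) by (field; lra).
  replace (x * S) with (PI / 2 * S * (2 * x / PI)) by (field; lra).
  apply Rmult_le_compat_r; [apply Rlt_le, Rdiv_lt_0_compat; lra | exact Key].
Qed.

Lemma INR_fact_prod n : INR (fact n) = prod_1_to INR n.
Proof.
  induction n as [|n IH]; [reflexivity|].
  change (fact (S n)) with (S n * fact n)%nat. rewrite mult_INR, IH. simpl. ring.
Qed.

Lemma pochhammer_succ_reflect y n :
  pochhammer_succ y n * pochhammer_succ (1 - y) n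
  = y * (INR n + 1 - y) * prod_1_to (fun k => INR k ^ 2 - y ^ 2) n.
Proof.
  induction n as [|n IH]; [simpl; ring|].
  cbn [pochhammer_succ prod_1_to].
  transitivity (pochhammer_succ y n * pochhammer_succ (1 - y) n
                * (y + INR (S n)) * (1 - y + INR (S n))); [ring|].
  rewrite IH, !S_INR. ring.
Qed.

Lemma gauss_seq_reflect y n : (1 <= n)%nat ->
  gauss_seq y n * gauss_seq (1 - y) n
  = y * (INR n + 1 - y) / INR n * prod_1_to (fun k => 1 - y ^ 2 / INR k ^ 2) n.
Proof.
  intro Hn. assert (0 < INR n) by (apply lt_0_INR; lia).
  assert (Epow : Rpower (INR n) y * Rpower (INR n) (1 - y) = INR n).
  { rewrite <- Rpower_plus. replace (y + (1 - y)) with 1 by ring. apply Rpower_1. lra. }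
  assert (Eprod : prod_1_to (fun k => INR k ^ 2 - y ^ 2) n
    = INR (fact n) * INR (fact n) * prod_1_to (fun k => 1 - y ^ 2 / INR k ^ 2) n).
  { rewrite INR_fact_prod, <- !prod_1_to_mult. apply prod_1_to_ext. intros k Hk.
    assert (0 < INR k) by (apply lt_0_INR; lia). field. lra. }
  pose proof (INR_fact_lt_0 n). pose proof (Rpower_pos (INR n) y).
  pose proof (Rpower_pos (INR n) (1 - y)).
  unfold gauss_seq.
  transitivity (pochhammer_succ y n * pochhammer_succ (1 - y) n /
     (INR (fact n) * INR (fact n) * (Rpower (INR n) y * Rpower (INR n) (1 - y))));
    [field; repeat split; lra|].
  rewrite pochhammer_succ_reflect, Epow, Eprod. field. repeat split; lra.
Qed.

Lemma is_lim_seq_gauss_seq_reflect y :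
  is_lim_seq (fun n => gauss_seq y (S n) * gauss_seq (1 - y) (S n)) (rgamma y * rgamma (1 - y)).
Proof.
  apply -> (is_lim_seq_incr_1 (fun n => gauss_seq y n * gauss_seq (1 - y) n)).
  apply is_lim_seq_mult'; apply is_lim_seq_gauss_seq.
Qed.

Lemma rgamma_reflect_ge y : 0 < y < 1 -> sin (PI * y) / PI <= rgamma y * rgamma (1 - y).
Proof.
  intro Hy.
  apply (is_lim_seq_le (fun _ => sin (PI * y) / PI)
    (fun n => gauss_seq y (S n) * gauss_seq (1 - y) (S n))
    (sin (PI * y) / PI) (rgamma y * rgamma (1 - y)));
    [| apply is_lim_seq_const | apply is_lim_seq_gauss_seq_reflect].
  intro n. rewrite gauss_seq_reflect by lia.
  pose proof (sin_le_euler_partial_product y (S n) Hy).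
  set (p := prod_1_to (fun k => 1 - y ^ 2 / INR k ^ 2) (S n)) in *.
  assert (0 < y * p).
  { apply Rmult_lt_0_compat; [lra|].
    apply prod_1_to_pos. intros k Hk. apply euler_factor_bounds; [lra | exact Hk]. }
  assert (HN : 0 < INR (S n)) by apply lt_0_INR, Nat.lt_0_succ.
  assert (1 <= (INR (S n) + 1 - y) / INR (S n)).
  { apply (Rmult_le_reg_r (INR (S n))); [exact HN|]. field_simplify; lra. }
  replace (y * (INR (S n) + 1 - y) / INR (S n) * p)
    with (y * p * ((INR (S n) + 1 - y) / INR (S n))) by (field; lra).
  nra.
Qed.

Lemma rgamma_reflect_le y : 0 < y < 1 -> rgamma y * rgamma (1 - y) <= y * (1 - y ^ 2).
Proof.
  intro Hy.
  apply (is_lim_seq_le (fun n => gauss_seq y (S n) * gauss_seq (1 - y) (S n))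
    (fun n => y * (1 - y ^ 2) * ((INR (S n) + (1 - y)) / (INR (S n) + 0)))
    (rgamma y * rgamma (1 - y)) (y * (1 - y ^ 2)));
    [| apply is_lim_seq_gauss_seq_reflect |].
  - intro n. rewrite gauss_seq_reflect by lia.
    assert (Hf : forall k, (1 <= k)%nat -> 0 <= 1 - y ^ 2 / INR k ^ 2 <= 1).
    { intros k Hk. pose proof (euler_factor_bounds y k ltac:(lra) Hk). lra. }
    pose proof (prod_1_to_le_first _ n Hf) as Hp. cbv beta in Hp.
    replace (1 - y ^ 2 / INR 1 ^ 2) with (1 - y ^ 2) in Hp by (simpl; field).
    assert (HN : 0 < INR (S n)) by apply lt_0_INR, Nat.lt_0_succ.
    assert (0 <= y * (INR (S n) + (1 - y)) / (INR (S n) + 0)).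
    { apply Rdiv_le_0_compat; nra. }
    replace (y * (INR (S n) + 1 - y) / INR (S n)) with (y * (INR (S n) + (1 - y)) / (INR (S n) + 0))
      by (field; lra).
    replace (y * (1 - y ^ 2) * ((INR (S n) + (1 - y)) / (INR (S n) + 0)))
      with (y * (INR (S n) + (1 - y)) / (INR (S n) + 0) * (1 - y ^ 2)) by (field; lra).
    apply Rmult_le_compat_l; assumption.
  - replace (Finite (y * (1 - y ^ 2))) with (Finite (y * (1 - y ^ 2) * 1)) by (f_equal; ring).
    apply is_lim_seq_mult'; [apply is_lim_seq_const|].
    apply -> (is_lim_seq_incr_1 (fun n => (INR n + (1 - y)) / (INR n + 0))).
    apply is_lim_seq_INR_add_ratio.
Qed.

Lemma rgamma_pos y : 0 < y -> 0 < rgamma y.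
Proof.
  destruct (INR_unbounded y) as [m Hm]. revert y Hm.
  induction m as [|m IH]; intros y Hm Hy; [simpl in Hm; lra|].
  rewrite S_INR in Hm.
  destruct (Rlt_or_le 1 y) as [H1 | H1].
  - pose proof (rgamma_rec (y - 1)) as E. replace (y - 1 + 1) with y in E by ring.
    pose proof (IH (y - 1) ltac:(lra) ltac:(lra)). nra.
  - destruct (Req_dec y 1) as [-> | Hne]; [rewrite rgamma_1; lra|].
    pose proof PI_RGT_0.
    assert (0 < sin (PI * y) / PI) by (apply Rdiv_lt_0_compat; [apply sin_gt_0; nra | lra]).
    pose proof (rgamma_reflect_ge y ltac:(lra)).
    pose proof (rgamma_nonneg y Hy). pose proof (rgamma_nonneg (1 - y) ltac:(lra)).
    destruct (Req_dec (rgamma y) 0) as [E | E]; [rewrite E in *; nra | lra].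
Qed.

Lemma rgamma_reflect_shift x N : x < 1 ->
  Rabs (rgamma (x - INR N)) * rgamma (INR N + 1 - x) = Rabs (rgamma x) * rgamma (1 - x).
Proof.
  intro Hx. induction N as [|N IH].
  { replace (x - INR 0) with x by (simpl; ring).
    replace (INR 0 + 1 - x) with (1 - x) by (simpl; ring). reflexivity. }
  pose proof (pos_INR N).
  rewrite <- IH, S_INR, (rgamma_rec (x - (INR N + 1))), (rgamma_rec (INR N + 1 - x)).
  replace (x - (INR N + 1) + 1) with (x - INR N) by ring.
  replace (INR N + 1 - x + 1) with (INR N + 1 + 1 - x) by ring.
  rewrite Rabs_mult, (Rabs_left (x - (INR N + 1))) by lra. ring.
Qed.

Lemma rgamma_quotient_diff u v : rgamma v <> 0 ->
  rgamma u / rgamma v - rgamma (u + 1) / rgamma (v + 1) = (u - v) * rgamma (u + 1) / rgamma v.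
Proof.
  intro Hv. rewrite (rgamma_rec u). rewrite (rgamma_rec v) in *.
  assert (v <> 0 /\ rgamma (v + 1) <> 0) as [H1 H2]
    by (split; intro E; rewrite E in Hv; apply Hv; ring).
  field. split; assumption.
Qed.

(** * Gautschi-type bounds *)

Lemma two_mul_le_ln_ratio t : 0 <= t < 1 -> 2 * t <= ln ((1 + t) / (1 - t)).
Proof.
  intros [H0 H1].
  destruct (Req_dec t 0) as [-> | Ht].
  { replace ((1 + 0) / (1 - 0)) with 1 by field. rewrite ln_1. lra. }
  set (f := fun u => ln (1 + u) - ln (1 - u) - 2 * u).
  set (df := fun u => / (1 + u) + / (1 - u) - 2).
  destruct (MVT_gen f 0 t df) as [c [Hc Eq]].
  - intros u Hu. rewrite Rmin_left, Rmax_right in Hu by lra.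
    unfold f, df. auto_derive; [lra|]. field. lra.
  - intros u Hu. rewrite Rmin_left, Rmax_right in Hu by lra.
    apply continuity_pt_filterlim, (ex_derive_continuous (V := R_NormedModule) f).
    unfold f. auto_derive. lra.
  - rewrite Rmin_left, Rmax_right in Hc by lra.
    assert (Hdf : 0 <= df c).
    { unfold df. replace (/ (1 + c) + / (1 - c) - 2) with (2 * c * c / ((1 + c) * (1 - c)))
        by (field; lra).
      apply Rmult_le_pos; [nra | apply Rlt_le, Rinv_0_lt_compat; nra]. }
    unfold f in Eq. rewrite Rplus_0_r, Rminus_0_r, ln_1 in Eq.
    rewrite ln_div by lra. nra.
Qed.

Lemma exp_two_mul_le_ratio t : 0 <= t < 1 -> exp (2 * t) <= (1 + t) / (1 - t).
Proof.
  intro Ht. rewrite <- (exp_ln ((1 + t) / (1 - t))) by (apply Rdiv_lt_0_compat; lra).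
  apply exp_le_exp_compat, two_mul_le_ln_ratio, Ht.
Qed.

Lemma Rpower_succ_div_le_ratio m x : 0 < x < m ->
  Rpower ((m + 1) / m) (2 * x) <= (m + x) / (m - x).
Proof.
  intro Hx. unfold Rpower.
  apply Rle_trans with (exp (2 * (x / m))).
  - apply exp_le_exp_compat. pose proof (ln_succ_div_le m ltac:(lra)).
    replace (2 * (x / m)) with (2 * x * (1 / m)) by (field; lra).
    apply Rmult_le_compat_l; lra.
  - replace ((m + x) / (m - x)) with ((1 + x / m) / (1 - x / m)) by (field; lra).
    apply exp_two_mul_le_ratio. split; [apply Rlt_le, Rdiv_lt_0_compat; lra|].
    apply (Rmult_lt_reg_r m); [lra|].
    unfold Rdiv. rewrite Rmult_assoc, Rinv_l by lra. lra.
Qed.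

Lemma ratio_le_Rpower_pred_div m x : 0 < x -> 1 + x < m ->
  (m + x) / (m - x) <= Rpower ((m - x) / (m - 1 - x)) (2 * x).
Proof.
  intros Hx Hm.
  pose proof (Rpower_succ_div_ge (2 * x) (m - 1 - x) ltac:(lra) ltac:(lra)) as H.
  replace (m - 1 - x + 1) with (m - x) in H by ring.
  replace ((m + x) / (m - x)) with (1 + 2 * x / (m - x)) by (field; lra). exact H.
Qed.

Lemma pochhammer_succ_div_S u v n : 0 < v ->
  pochhammer_succ u (S n) / pochhammer_succ v (S n)
  = pochhammer_succ u n / pochhammer_succ v n * ((u + INR (S n)) / (v + INR (S n))).
Proof.
  intro Hv. cbn [pochhammer_succ].
  pose proof (pochhammer_succ_pos v n Hv). pose proof (pos_INR (S n)).
  field. split; lra.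
Qed.

Lemma pochhammer_succ_ratio_ge K x n : 0 < x < K ->
  Rpower ((K + INR n + 1) / K) (2 * x) <= pochhammer_succ (K + x) n / pochhammer_succ (K - x) n.
Proof.
  intro Hx. induction n as [|n IH].
  - cbn [pochhammer_succ]. replace (K + INR 0 + 1) with (K + 1) by (simpl; ring).
    apply Rpower_succ_div_le_ratio. exact Hx.
  - rewrite pochhammer_succ_div_S, S_INR by lra. pose proof (pos_INR n) as Hn.
    pose proof (Rpower_succ_div_le_ratio (K + INR n + 1) x ltac:(lra)) as H.
    replace (K + x + (INR n + 1)) with (K + INR n + 1 + x) by ring.
    replace (K - x + (INR n + 1)) with (K + INR n + 1 - x) by ring.
    replace (Rpower ((K + (INR n + 1) + 1) / K) (2 * x))
      with (Rpower ((K + INR n + 1) / K) (2 * x)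
            * Rpower ((K + INR n + 1 + 1) / (K + INR n + 1)) (2 * x)).
    + apply Rmult_le_compat; [apply Rlt_le, Rpower_pos | apply Rlt_le, Rpower_pos | exact IH | exact H].
    + rewrite Rpower_mult_distr by (apply Rdiv_lt_0_compat; lra). f_equal. field. lra.
Qed.

Lemma pochhammer_succ_ratio_le K x n : 0 < x -> 1 + x < K ->
  pochhammer_succ (K + x) n / pochhammer_succ (K - x) n
  <= Rpower ((K + INR n - x) / (K - 1 - x)) (2 * x).
Proof.
  intros Hx HK. induction n as [|n IH].
  - cbn [pochhammer_succ]. replace (K + INR 0 - x) with (K - x) by (simpl; ring).
    apply ratio_le_Rpower_pred_div; lra.
  - rewrite pochhammer_succ_div_S, S_INR by lra. pose proof (pos_INR n) as Hn.
    pose proof (ratio_le_Rpower_pred_div (K + INR n + 1) x Hx ltac:(lra)) as H.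
    replace (K + x + (INR n + 1)) with (K + INR n + 1 + x) by ring.
    replace (K - x + (INR n + 1)) with (K + INR n + 1 - x) by ring.
    apply Rle_trans with (Rpower ((K + INR n - x) / (K - 1 - x)) (2 * x)
      * Rpower ((K + INR n + 1 - x) / (K + INR n + 1 - 1 - x)) (2 * x)).
    + apply Rmult_le_compat; [| | exact IH | exact H].
      * apply Rlt_le, Rdiv_lt_0_compat; apply pochhammer_succ_pos; lra.
      * apply Rlt_le, Rdiv_lt_0_compat; lra.
    + right. rewrite Rpower_mult_distr by (apply Rdiv_lt_0_compat; lra). f_equal. field. lra.
Qed.

Lemma gauss_seq_quotient K x n : 0 < x < K -> (1 <= n)%nat ->
  gauss_seq (K + x) n / gauss_seq (K - x) n
  = pochhammer_succ (K + x) n / pochhammer_succ (K - x) n / Rpower (INR n) (2 * x).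
Proof.
  intros Hx Hn. assert (0 < INR n) by (apply lt_0_INR; lia).
  unfold gauss_seq. replace (K + x) with (K - x + 2 * x) at 2 by ring. rewrite Rpower_plus.
  pose proof (INR_fact_lt_0 n). pose proof (Rpower_pos (INR n) (K - x)).
  pose proof (Rpower_pos (INR n) (2 * x)). pose proof (pochhammer_succ_pos (K - x) n ltac:(lra)).
  field. repeat split; lra.
Qed.

Lemma is_lim_seq_gauss_seq_quotient K x : 0 < x < K ->
  is_lim_seq (fun n => gauss_seq (K + x) (S n) / gauss_seq (K - x) (S n))
    (rgamma (K + x) / rgamma (K - x)).
Proof.
  intro Hx. apply -> (is_lim_seq_incr_1 (fun n => gauss_seq (K + x) n / gauss_seq (K - x) n)).
  apply is_lim_seq_div'; [apply is_lim_seq_gauss_seq | apply is_lim_seq_gauss_seq |].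
  apply Rgt_not_eq, rgamma_pos. lra.
Qed.

Lemma rgamma_quotient_ge K x : 0 < x < K ->
  / Rpower K (2 * x) <= rgamma (K + x) / rgamma (K - x).
Proof.
  intro Hx.
  apply (is_lim_seq_le (fun _ => / Rpower K (2 * x))
    (fun n => gauss_seq (K + x) (S n) / gauss_seq (K - x) (S n)) (/ Rpower K (2 * x)) (rgamma (K + x) / rgamma (K - x)));
    [| apply is_lim_seq_const | apply is_lim_seq_gauss_seq_quotient, Hx].
  intro n. rewrite gauss_seq_quotient by (lra || lia).
  pose proof (pochhammer_succ_ratio_ge K x (S n) Hx) as H.
  pose proof (pos_INR n). rewrite S_INR in *.
  apply Rle_trans with
    (Rpower ((K + (INR n + 1) + 1) / K) (2 * x) / Rpower (INR n + 1) (2 * x));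
    [| apply Rmult_le_compat_r; [apply Rlt_le, Rinv_0_lt_compat, Rpower_pos | exact H]].
  rewrite Rpower_div by (try apply Rdiv_lt_0_compat; lra).
  replace (/ Rpower K (2 * x)) with (Rpower 1 (2 * x) / Rpower K (2 * x))
    by (rewrite Rpower_1_base; field; apply Rgt_not_eq, Rpower_pos).
  rewrite Rpower_div by lra.
  apply Rle_Rpower_l; [lra|]. split; [apply Rdiv_lt_0_compat; lra|].
  apply (Rmult_le_reg_r (K * (INR n + 1))); [nra|]. field_simplify; nra.
Qed.

Lemma rgamma_quotient_le K x : 0 < x -> 1 + x < K ->
  rgamma (K + x) / rgamma (K - x) <= / Rpower (K - 1 - x) (2 * x).
Proof.
  intros Hx HK.
  apply (is_lim_seq_le (fun n => gauss_seq (K + x) (S n) / gauss_seq (K - x) (S n))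
    (fun n => Rpower ((INR n + (K + 1 - x)) / (INR n + 1)) (2 * x) / Rpower (K - 1 - x) (2 * x))
    (rgamma (K + x) / rgamma (K - x)) (/ Rpower (K - 1 - x) (2 * x)));
    [| apply is_lim_seq_gauss_seq_quotient; lra |].
  - intro n. rewrite gauss_seq_quotient by (lra || lia).
    pose proof (pochhammer_succ_ratio_le K x (S n) Hx HK) as H.
    pose proof (pos_INR n). rewrite S_INR in *.
    apply Rle_trans with
      (Rpower ((K + (INR n + 1) - x) / (K - 1 - x)) (2 * x) / Rpower (INR n + 1) (2 * x));
      [apply Rmult_le_compat_r; [apply Rlt_le, Rinv_0_lt_compat, Rpower_pos | exact H]|].
    right. rewrite !Rpower_div by (try apply Rdiv_lt_0_compat; lra). f_equal. field. lra.
  - pose proof (Rpower_pos (K - 1 - x) (2 * x)).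
    replace (Finite (/ Rpower (K - 1 - x) (2 * x)))
      with (Finite (1 / Rpower (K - 1 - x) (2 * x))) by (f_equal; field; lra).
    apply is_lim_seq_div'; [| apply is_lim_seq_const | lra].
    apply is_lim_seq_Rpower_1, is_lim_seq_INR_add_ratio.
Qed.

Definition gamma_quot (x : R) (N : nat) : R := rgamma (INR N + x) / rgamma (INR N - x).

Lemma is_lim_seq_gamma_quot x : 0 < x -> is_lim_seq (gamma_quot x) 0.
Proof.
  intro Hx. destruct (INR_unbounded (2 + x)) as [m Hm].
  apply (is_lim_seq_incr_n _ m).
  apply (is_lim_seq_le_le (fun _ => 0) _ (fun n => / Rpower (INR n + (INR m - 1 - x)) (2 * x)));
    [| apply is_lim_seq_const | apply is_lim_seq_inv_Rpower; lra].
  intro n. pose proof (pos_INR n). unfold gamma_quot. rewrite plus_INR.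
  split.
  - apply Rlt_le, Rdiv_lt_0_compat; apply rgamma_pos; lra.
  - replace (INR n + (INR m - 1 - x)) with (INR n + INR m - 1 - x) by ring.
    apply rgamma_quotient_le; lra.
Qed.

(** * The tail of the coefficients *)

Lemma abs_cj_succ alpha M : 0 < alpha < 2 ->
  Rabs (cj alpha (Z.of_nat (S M)))
  = Gamma (alpha + 1) * (rgamma (alpha / 2) * rgamma (1 - alpha / 2)) / alpha
    * (gamma_quot (alpha / 2) (S M) - gamma_quot (alpha / 2) (S (S M))).
Proof.
  intro Ha. unfold cj, gamma_quot, Gamma.
  rewrite <- INR_IZR_INZ, <- pow_powerRZ, (S_INR (S M)).
  set (x := alpha / 2). set (N := INR (S M)).
  assert (HN : N = INR M + 1) by apply S_INR.
  pose proof (pos_INR M).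
  pose proof (rgamma_pos (alpha + 1) ltac:(lra)) as HA.
  pose proof (rgamma_pos (N + 1 + x) ltac:(unfold x; lra)) as HB.
  pose proof (rgamma_pos (N - x) ltac:(unfold x; lra)) as HC.
  pose proof (rgamma_pos x ltac:(unfold x; lra)) as Hx.
  pose proof (rgamma_reflect_shift x M ltac:(unfold x; lra)) as Hrefl.
  pose proof (rgamma_quotient_diff (N + x) (N - x) ltac:(lra)) as Hdiff.
  rewrite (Rabs_pos_eq (rgamma x)) in Hrefl by lra.
  replace (INR M + 1 - x) with (N - x) in Hrefl by lra.
  replace (N + x + 1) with (N + 1 + x) in Hdiff by ring.
  replace (N - x + 1) with (N + 1 - x) in Hdiff by ring.
  rewrite Hdiff.
  replace (x - N + 1) with (x - INR M) by lra.
  replace (x + N + 1) with (N + 1 + x) by ring.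
  rewrite !Rabs_mult, pow_1_abs, Rabs_inv, (Rabs_pos_eq (rgamma (alpha + 1))),
    (Rabs_pos_eq (rgamma (N + 1 + x))) by lra.
  replace (Rabs (rgamma (x - INR M))) with (rgamma x * rgamma (1 - x) / rgamma (N - x))
    by (rewrite <- Hrefl; field; lra).
  replace (N + x - (N - x)) with alpha by (unfold x; field).
  field. repeat split; lra.
Qed.

Lemma is_series_abs_cj alpha k0 : 0 < alpha < 2 ->
  is_series (fun n => Rabs (cj alpha (Z.of_nat (k0 + 1 + n))))
    (Gamma (alpha + 1) * (rgamma (alpha / 2) * rgamma (1 - alpha / 2)) / alpha
     * gamma_quot (alpha / 2) (k0 + 1)).
Proof.
  intro Ha.
  set (C := Gamma (alpha + 1) * (rgamma (alpha / 2) * rgamma (1 - alpha / 2)) / alpha).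
  set (V := fun n => gamma_quot (alpha / 2) (k0 + 1 + n)).
  assert (HV : is_lim_seq V 0).
  { apply is_lim_seq_ext with (fun n => gamma_quot (alpha / 2) (n + (k0 + 1))).
    - intro n. unfold V. f_equal. lia.
    - apply (is_lim_seq_incr_n (gamma_quot (alpha / 2))), is_lim_seq_gamma_quot. lra. }
  apply (is_series_ext (fun n => C * (V n - V (S n)))).
  - intro n. unfold V. replace (k0 + 1 + n)%nat with (S (k0 + n)) by lia.
    replace (k0 + 1 + S n)%nat with (S (S (k0 + n))) by lia.
    symmetry. apply abs_cj_succ, Ha.
  - replace (gamma_quot (alpha / 2) (k0 + 1)) with (V O) by (unfold V; f_equal; lia).
    exact (is_series_scal_l C _ _ (is_series_telescope V HV)).
Qed.

Lemma ln_one_sub_le u : 0 < u < 1 -> ln (1 - u) <= - (2 * u / (2 - u)).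
Proof.
  intro Hu.
  assert (Ht : 0 <= u / (2 - u) < 1).
  { split; [apply Rlt_le, Rdiv_lt_0_compat; lra|].
    apply (Rmult_lt_reg_r (2 - u)); [lra|]. unfold Rdiv. rewrite Rmult_assoc, Rinv_l by lra. lra. }
  pose proof (two_mul_le_ln_ratio _ Ht) as H.
  replace ((1 + u / (2 - u)) / (1 - u / (2 - u))) with (/ (1 - u)) in H by (field; lra).
  rewrite ln_Rinv in H by lra.
  replace (2 * (u / (2 - u))) with (2 * u / (2 - u)) in H by (field; lra). lra.
Qed.

(* With u = (1 + alpha)/(5 + alpha/2), the bound ln(1 - u) <= -2u/(2 - u) makes the
   exponent at most -(1 + alpha)^2/9 + alpha ln((k + 1)/(k + 1/2)), and the last
   logarithm is at most 1/7. *)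
Lemma tail_lower_constant_lt alpha k : 1 < alpha < 2 -> 3 <= k ->
  Rpower (1 - (1 + alpha) / (5 + alpha / 2)) (5 + alpha / 2) * exp (alpha + 1)
    * Rpower (k + 1) alpha < Rpower (k + 1 / 2) alpha.
Proof.
  intros Ha Hk.
  set (p := 5 + alpha / 2). set (u := (1 + alpha) / p).
  assert (Hu : 0 < u < 1).
  { unfold u, p. split; [apply Rdiv_lt_0_compat; lra|].
    apply (Rmult_lt_reg_r (5 + alpha / 2)); [lra|].
    unfold Rdiv. rewrite Rmult_assoc, Rinv_l by lra. lra. }
  assert (Hp : p * ln (1 - u) <= - ((1 + alpha) + (1 + alpha) ^ 2 / 9)).
  { replace (- ((1 + alpha) + (1 + alpha) ^ 2 / 9)) with (p * - (2 * u / (2 - u)))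
      by (unfold u, p; field; lra).
    apply Rmult_le_compat_l; [unfold p; lra | apply ln_one_sub_le, Hu]. }
  assert (Hk1 : alpha * ln (k + 1) <= alpha * ln (k + 1 / 2) + alpha / 7).
  { assert (ln ((k + 1) / (k + 1 / 2)) <= 1 / 7).
    { eapply Rle_trans; [apply ln_le_sub_1, Rdiv_lt_0_compat; lra|].
      replace ((k + 1) / (k + 1 / 2) - 1) with (/ (2 * k + 1)) by (field; lra).
      replace (1 / 7) with (/ 7) by field. apply Rinv_le_contravar; lra. }
    rewrite ln_div in H by lra. nra. }
  assert (alpha / 7 < (1 + alpha) ^ 2 / 9) by nra.
  unfold Rpower. rewrite <- !exp_plus. apply exp_increasing. lra.
Qed.

Lemma sin_lb_expand a : sin_lb a = a - a ^ 3 / 6 + a ^ 5 / 120 - a ^ 7 / 5040.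
Proof.
  unfold sin_lb, sin_approx. cbn [sum_f_R0]. unfold sin_term.
  change (fact (2 * 0 + 1)) with 1%nat. change (fact (2 * 1 + 1)) with 6%nat.
  change (fact (2 * 2 + 1)) with 120%nat. change (fact (2 * 3 + 1)) with 5040%nat.
  rewrite !INR_IZR_INZ. simpl. field.
Qed.

(* With y = 1 - x: x (1 - x^2) = y (1 - y) (2 - y) and sin(pi y) >= pi y (1 - (pi y)^2/6);
   the constant sqrt 2 * exp(13/12) exceeds 2.9, which is enough. *)
Lemma PI_mul_cubic_lt_sin x : 1 / 2 < x < 1 ->
  PI * (x * (1 - x ^ 2)) < sqrt 2 * exp (13 / 12) * sin (PI * x).
Proof.
  intro Hx. set (y := 1 - x). assert (Hy : 0 < y < 1 / 2) by (unfold y; lra).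
  pose proof PI_RGT_0. pose proof PI_4.
  replace (sin (PI * x)) with (sin (PI * y)) by (unfold y; rewrite <- sin_PI_x; f_equal; ring).
  replace (x * (1 - x ^ 2)) with (y * ((1 - y) * (2 - y))) by (unfold y; ring).
  set (t := PI * y).
  assert (Ht : 0 < t <= 2) by (unfold t; nra).
  assert (Hsin : t * (1 - t ^ 2 / 6) <= sin t).
  { destruct (SIN t ltac:(unfold t; nra) ltac:(unfold t; nra)) as [Hlb _].
    rewrite sin_lb_expand in Hlb.
    assert (0 <= t ^ 5 / 120 - t ^ 7 / 5040).
    { replace (t ^ 5 / 120 - t ^ 7 / 5040) with (t ^ 5 * (42 - t ^ 2) / 5040) by field.
      apply Rmult_le_pos; [apply Rmult_le_pos; [apply pow_le; lra | nra] | lra]. }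
    lra. }
  assert (Hsqrt : 1.41 < sqrt 2).
  { rewrite <- (sqrt_square 1.41) by lra. apply sqrt_lt_1_alt. lra. }
  assert (Hexp : 1 + 13 / 12 <= exp (13 / 12)) by apply exp_ineq1_le.
  assert (Hc : 2.9 < sqrt 2 * exp (13 / 12)) by nra.
  assert (Ht2 : t ^ 2 <= 16 * y ^ 2).
  { assert (PI * PI <= 16) by nra.
    replace (t ^ 2) with (PI * PI * (y * y)) by (unfold t; ring).
    replace (16 * y ^ 2) with (16 * (y * y)) by ring.
    apply Rmult_le_compat_r; nra. }
  assert (Hpoly : (1 - y) * (2 - y) < sqrt 2 * exp (13 / 12) * (1 - t ^ 2 / 6)).
  { assert ((1 - y) * (2 - y) < 2.9 * (1 - 16 * y ^ 2 / 6)) by nra.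
    assert (0 <= 1 - 16 * y ^ 2 / 6) by nra.
    assert (2.9 * (1 - 16 * y ^ 2 / 6) <= sqrt 2 * exp (13 / 12) * (1 - t ^ 2 / 6)).
    { apply Rmult_le_compat; lra. }
    lra. }
  apply Rlt_le_trans with (t * (sqrt 2 * exp (13 / 12) * (1 - t ^ 2 / 6))).
  - replace (PI * (y * ((1 - y) * (2 - y)))) with (t * ((1 - y) * (2 - y))) by (unfold t; ring).
    apply Rmult_lt_compat_l; lra.
  - replace (t * (sqrt 2 * exp (13 / 12) * (1 - t ^ 2 / 6)))
      with (sqrt 2 * exp (13 / 12) * (t * (1 - t ^ 2 / 6))) by ring.
    apply Rmult_le_compat_l; [nra | exact Hsin].
Qed.

Lemma abs_cj_tail_gt alpha k0 : 1 < alpha < 2 -> (3 <= k0)%nat ->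
  Rpower (1 - (1 + alpha) / (5 + alpha / 2)) (5 + alpha / 2) * exp (alpha + 1)
    * Gamma (alpha + 1) * sin (PI * alpha / 2)
    / (PI * alpha * Rpower (INR k0 + 1 / 2) alpha)
  < Gamma (alpha + 1) * (rgamma (alpha / 2) * rgamma (1 - alpha / 2)) / alpha
    * gamma_quot (alpha / 2) (k0 + 1).
Proof.
  intros Ha Hk. assert (Hk3 : 3 <= INR k0) by (replace 3 with (INR 3) by (simpl; ring); apply le_INR, Hk).
  pose proof PI_RGT_0.
  pose proof (tail_lower_constant_lt alpha (INR k0) Ha Hk3) as Hc.
  pose proof (rgamma_reflect_ge (alpha / 2) ltac:(lra)) as Hs.
  assert (Hq : / Rpower (INR k0 + 1) alpha <= gamma_quot (alpha / 2) (k0 + 1)).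
  { unfold gamma_quot. replace (INR (k0 + 1)) with (INR k0 + 1) by (rewrite plus_INR; reflexivity).
    replace alpha with (2 * (alpha / 2)) at 1 by field.
    apply rgamma_quotient_ge. lra. }
  replace (PI * alpha / 2) with (PI * (alpha / 2)) by field.
  set (L := Rpower (1 - (1 + alpha) / (5 + alpha / 2)) (5 + alpha / 2) * exp (alpha + 1)) in *.
  set (G := Gamma (alpha + 1)).
  set (sig := sin (PI * (alpha / 2)) / PI) in *.
  set (R1 := Rpower (INR k0 + 1) alpha) in *. set (Rh := Rpower (INR k0 + 1 / 2) alpha) in *.
  assert (0 < G) by (apply Rinv_0_lt_compat, rgamma_pos; lra).
  assert (0 < sig) by (apply Rdiv_lt_0_compat; [apply sin_gt_0 | ]; nra).
  assert (0 < R1) by apply Rpower_pos. assert (0 < Rh) by apply Rpower_pos.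
  apply Rlt_le_trans with (G * sig / alpha * / R1).
  - replace (L * G * sin (PI * (alpha / 2)) / (PI * alpha * Rh)) with (G * sig / alpha * (L / Rh))
      by (unfold sig; field; repeat split; lra).
    apply Rmult_lt_compat_l; [apply Rdiv_lt_0_compat; nra|].
    apply (Rmult_lt_reg_r (Rh * R1)); [nra|].
    replace (L / Rh * (Rh * R1)) with (L * R1) by (field; lra).
    replace (/ R1 * (Rh * R1)) with Rh by (field; lra). exact Hc.
  - apply Rmult_le_compat; [| apply Rlt_le, Rinv_0_lt_compat; lra | | exact Hq].
    + apply Rlt_le, Rdiv_lt_0_compat; nra.
    + unfold Rdiv. apply Rmult_le_compat_r; [apply Rlt_le, Rinv_0_lt_compat; lra|].
      apply Rmult_le_compat_l; lra.
Qed.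

Lemma abs_cj_tail_lt alpha k0 : 1 < alpha < 2 -> (3 <= k0)%nat ->
  Gamma (alpha + 1) * (rgamma (alpha / 2) * rgamma (1 - alpha / 2)) / alpha
    * gamma_quot (alpha / 2) (k0 + 1)
  < sqrt 2 * exp (13 / 12) * Gamma (alpha + 1) * sin (PI * alpha / 2)
    / (PI * alpha * Rpower (INR k0 - 1) alpha).
Proof.
  intros Ha Hk. assert (Hk3 : 3 <= INR k0) by (replace 3 with (INR 3) by (simpl; ring); apply le_INR, Hk).
  pose proof PI_RGT_0.
  pose proof (PI_mul_cubic_lt_sin (alpha / 2) ltac:(lra)) as Hc.
  pose proof (rgamma_reflect_le (alpha / 2) ltac:(lra)) as Hs.
  assert (Hq : gamma_quot (alpha / 2) (k0 + 1) <= / Rpower (INR k0 - 1) alpha).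
  { unfold gamma_quot. replace (INR (k0 + 1)) with (INR k0 + 1) by (rewrite plus_INR; reflexivity).
    eapply Rle_trans; [apply rgamma_quotient_le; lra|].
    replace (2 * (alpha / 2)) with alpha by field.
    apply Rinv_le_contravar; [apply Rpower_pos|]. apply Rle_Rpower_l; lra. }
  replace (PI * alpha / 2) with (PI * (alpha / 2)) by field.
  set (x := alpha / 2) in *. set (G := Gamma (alpha + 1)).
  set (Rm := Rpower (INR k0 - 1) alpha) in *.
  assert (0 < G) by (apply Rinv_0_lt_compat, rgamma_pos; lra).
  assert (0 < Rm) by apply Rpower_pos.
  assert (0 <= rgamma x * rgamma (1 - x)).
  { apply Rmult_le_pos; apply rgamma_nonneg; unfold x; lra. }
  assert (0 <= gamma_quot x (k0 + 1)).
  { apply Rdiv_le_0_compat; [apply rgamma_nonneg | apply rgamma_pos]; rewrite plus_INR; simpl; unfold x; lra. }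
  apply Rle_lt_trans with (G * (x * (1 - x ^ 2)) / alpha * / Rm).
  - apply Rmult_le_compat; [| assumption | | exact Hq].
    + apply Rmult_le_pos; [nra | apply Rlt_le, Rinv_0_lt_compat; lra].
    + unfold Rdiv. apply Rmult_le_compat_r; [apply Rlt_le, Rinv_0_lt_compat; lra|].
      apply Rmult_le_compat_l; lra.
  - replace (G * (x * (1 - x ^ 2)) / alpha * / Rm)
      with (G / (PI * alpha * Rm) * (PI * (x * (1 - x ^ 2)))) by (field; repeat split; lra).
    replace (sqrt 2 * exp (13 / 12) * G * sin (PI * x) / (PI * alpha * Rm))
      with (G / (PI * alpha * Rm) * (sqrt 2 * exp (13 / 12) * sin (PI * x))) by (field; repeat split; lra).
    apply Rmult_lt_compat_l; [apply Rdiv_lt_0_compat; [lra | apply Rmult_lt_0_compat; nra] | exact Hc].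
Qed.

Theorem lemma1 (alpha : R) (k0 : nat) :
  1 < alpha < 2 -> (3 <= k0)%nat ->
  let tail := fun n : nat => Rabs (cj alpha (Z.of_nat (k0 + 1 + n))) in
  ex_series tail /\
  Rpower (1 - (1 + alpha) / (5 + alpha / 2)) (5 + alpha / 2) * exp (alpha + 1)
    * Gamma (alpha + 1) * sin (PI * alpha / 2)
    / (PI * alpha * Rpower (INR k0 + 1 / 2) alpha)
  < Series tail
  < sqrt 2 * exp (13 / 12) * Gamma (alpha + 1) * sin (PI * alpha / 2)
    / (PI * alpha * Rpower (INR k0 - 1) alpha).
Proof.
  intros Ha Hk tail.
  pose proof (is_series_abs_cj alpha k0 ltac:(lra)) as Hser.
  split; [eexists; exact Hser|].
  rewrite (is_series_unique tail _ Hser).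
  split; [apply abs_cj_tail_gt | apply abs_cj_tail_lt]; assumption.
Qed.
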